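(* Let $E_5=(0,I_5,M_5,N_5)$ be an equilibrium of system (S) with $B=0$, $I_5>0$, $M_5\ge 0$, $N_5\ge 0$ (so that necessarily $I_5=b/(m+\mu)$). Then $E_5$ is locally asymptotically stable provided the following three conditions hold: $$\frac{b}{I_5}<\gamma I_5+m+\lambda N_5,$$ $$2n+\frac{3p(M_5+N_5)}{hI_5}+\beta I_5+\delta N_5>r+\delta M_5,$$ $$\Big(r-n-\frac{p(2M_5+N_5)}{hI_5}-\beta I_5-\delta N_5\Big)\Big(\delta M_5-n-\frac{p(M_5+2N_5)}{hI_5}\Big)+\Big(\beta I_5-\frac{pN_5}{hI_5}+\delta N_5\Big)\Big(\frac{pM_5}{hI_5}+\delta M_5-r\Big)>0.$$
   Context: All parameters $b,\lambda,\gamma,m,\mu,r,n,p,h,\beta,\delta,e$ are positive constants. Here $B,I$ denote healthy and infected bees and $M,N$ healthy and infected mites. The model (S) is $$B'=\frac{bB}{B+I}-\lambda BN-\gamma BI-mB,\qquad I'=\frac{bI}{B+I}+\lambda BN+\gamma BI-(m+\mu)I,$$ $$M'=r(M+N)-nM-\frac{p}{h(B+I)}M(M+N)-M(\beta I+\delta N+eB),$$ $$N'=-nN-\frac{p}{h(B+I)}N(M+N)+\beta MI+\delta MN-eNB,$$ considered on the domain $\mathcal{D}^0=\{(B,I,M,N)\in\mathbb{R}^4_+ : B+I\neq 0\}$, where $\mathbb{R}_+=[0,\infty)$. *)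

From Stdlib Require Import Reals Lra.
Open Scope R_scope.

Definition fB (b lam gam m mu r n p h beta delta e : R) (B I M N : R) : R :=
  b * B / (B + I) - lam * B * N - gam * B * I - m * B.
Definition fI (b lam gam m mu r n p h beta delta e : R) (B I M N : R) : R :=
  b * I / (B + I) + lam * B * N + gam * B * I - (m + mu) * I.
Definition fM (b lam gam m mu r n p h beta delta e : R) (B I M N : R) : R :=
  r * (M + N) - n * M - p / (h * (B + I)) * M * (M + N)
  - M * (beta * I + delta * N + e * B).
Definition fN (b lam gam m mu r n p h beta delta e : R) (B I M N : R) : R :=
  - n * N - p / (h * (B + I)) * N * (M + N) + beta * M * I + delta * M * N
  - e * N * B.

Definition inD0 (B I M N : R) : Prop :=
  0 <= B /\ 0 <= I /\ 0 <= M /\ 0 <= N /\ B + I <> 0.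

(* distance in R^4 (l1 norm; all norms on R^4 are equivalent) *)
Definition dist4 (B I M N B0 I0 M0 N0 : R) : R :=
  Rabs (B - B0) + Rabs (I - I0) + Rabs (M - M0) + Rabs (N - N0).

Definition is_solution (b lam gam m mu r n p h beta delta e : R)
    (B I M N : R -> R) : Prop :=
  (forall t, 0 <= t -> inD0 (B t) (I t) (M t) (N t)) /\
  (forall t, 0 < t ->
     derivable_pt_lim B t (fB b lam gam m mu r n p h beta delta e (B t) (I t) (M t) (N t)) /\
     derivable_pt_lim I t (fI b lam gam m mu r n p h beta delta e (B t) (I t) (M t) (N t)) /\
     derivable_pt_lim M t (fM b lam gam m mu r n p h beta delta e (B t) (I t) (M t) (N t)) /\
     derivable_pt_lim N t (fN b lam gam m mu r n p h beta delta e (B t) (I t) (M t) (N t))) /\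
  (forall eps, 0 < eps -> exists dlt, 0 < dlt /\
     forall t, 0 <= t < dlt ->
       dist4 (B t) (I t) (M t) (N t) (B 0) (I 0) (M 0) (N 0) < eps).

Definition is_equilibrium (b lam gam m mu r n p h beta delta e : R)
    (B0 I0 M0 N0 : R) : Prop :=
  fB b lam gam m mu r n p h beta delta e B0 I0 M0 N0 = 0 /\
  fI b lam gam m mu r n p h beta delta e B0 I0 M0 N0 = 0 /\
  fM b lam gam m mu r n p h beta delta e B0 I0 M0 N0 = 0 /\
  fN b lam gam m mu r n p h beta delta e B0 I0 M0 N0 = 0.

Definition loc_asympt_stable (b lam gam m mu r n p h beta delta e : R)
    (B0 I0 M0 N0 : R) : Prop :=
  (forall eps, 0 < eps -> exists dlt, 0 < dlt /\
     forall B I M N : R -> R,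
       is_solution b lam gam m mu r n p h beta delta e B I M N ->
       dist4 (B 0) (I 0) (M 0) (N 0) B0 I0 M0 N0 < dlt ->
       forall t, 0 <= t -> dist4 (B t) (I t) (M t) (N t) B0 I0 M0 N0 < eps) /\
  (exists dlt, 0 < dlt /\
     forall B I M N : R -> R,
       is_solution b lam gam m mu r n p h beta delta e B I M N ->
       dist4 (B 0) (I 0) (M 0) (N 0) B0 I0 M0 N0 < dlt ->
       forall eps, 0 < eps -> exists T, 0 <= T /\
         forall t, T <= t -> dist4 (B t) (I t) (M t) (N t) B0 I0 M0 N0 < eps).

From Stdlib Require Import Reals Lra Classical.
Open Scope R_scope.

(* At E5 the linearisation of (S) is block triangular: B decays at
   rate k = gam I5 + m + lam N5 - b/I5 > 0 (condition c1), I - I5 at rate b/I5,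
   and (M - M5, N - N5) follows a 2x2 matrix whose trace is negative (c2) and
   whose determinant is positive (c3).  Take
     V = B + K (I - I5)^2 + W (M - M5, N - N5)
   with W an explicit quadratic Lyapunov function of that matrix; B enters
   linearly because B >= 0 on D0.  In a small box around E5 the derivative of V
   along (S) is at most -(k/4) B - (I - I5)^2 - c |(M - M5, N - N5)|^2: the
   coupling of I - I5 into the mite equations is absorbed by choosing K large,
   and every other term is a small multiple of these.  Hence V' <= -alpha V on a
   small sublevel set of V, which is therefore forward invariant, and V decays
   exponentially there; as V is comparable with the distance to E5, E5 is stable
   and attracting. *)

Lemma Rabs_le_inv a r : Rabs a <= r -> - r <= a <= r.
Proof.
  intro H. pose proof (Rle_abs a). pose proof (Rle_abs (- a)).
  rewrite Rabs_Ropp in *. lra.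
Qed.

(* Young's inequality: a large enough coefficient [A] on [a^2] absorbs the cross term. *)
Lemma cross_term_absorb A C t a u : 0 < t -> 4 * C * C + t <= A * t -> 0 <= a ->
  - A * (a * a) + 2 * (a * (C * u)) <= - (a * a) + t / 4 * (u * u).
Proof.
  intros Ht HA Ha.
  apply Rmult_le_reg_l with t; [exact Ht|].
  pose proof (Rle_0_sqr (2 * C * a - t * u / 2)). unfold Rsqr in *.
  assert (0 <= (A * t - 4 * C * C - t) * (a * a)) by (apply Rmult_le_pos; nra).
  nra.
Qed.

Lemma mul_le_of_le_div r X Y : 0 < X -> r <= Y / X -> r * X <= Y.
Proof.
  intros HX H. apply Rmult_le_compat_r with (r := X) in H; [|lra].
  replace (Y / X * X) with Y in H by (field; lra). exact H.
Qed.

Lemma Rmin_le_five a b c d f :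
  let x := Rmin a (Rmin b (Rmin c (Rmin d f))) in x <= a /\ x <= b /\ x <= c /\ x <= d /\ x <= f.
Proof.
  intro x. unfold x. pose proof (Rmin_l a (Rmin b (Rmin c (Rmin d f)))).
  pose proof (Rmin_r a (Rmin b (Rmin c (Rmin d f)))).
  pose proof (Rmin_l b (Rmin c (Rmin d f))). pose proof (Rmin_r b (Rmin c (Rmin d f))).
  pose proof (Rmin_l c (Rmin d f)). pose proof (Rmin_r c (Rmin d f)).
  pose proof (Rmin_l d f). pose proof (Rmin_r d f). lra.
Qed.

Lemma Rabs_mult_le a c A C : Rabs a <= A -> Rabs c <= C -> Rabs (a * c) <= A * C.
Proof.
  intros Ha Hc. rewrite Rabs_mult.
  apply Rmult_le_compat; [apply Rabs_pos | apply Rabs_pos | exact Ha | exact Hc].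
Qed.

Lemma Rabs_lin_le c1 c2 x y P :
  Rabs c1 <= P -> Rabs c2 <= P -> Rabs (c1 * x + c2 * y) <= P * (Rabs x + Rabs y).
Proof.
  intros H1 H2. eapply Rle_trans; [apply Rabs_triang|]. rewrite !Rabs_mult.
  pose proof (Rabs_pos x). pose proof (Rabs_pos y).
  rewrite Rmult_plus_distr_l.
  apply Rplus_le_compat; apply Rmult_le_compat_r; assumption.
Qed.

(** * Differential inequalities on [0, +oo) *)

Lemma le_of_derivative_nonpos (f f' : R -> R) (a b : R) :
  a <= b ->
  (forall c, a <= c <= b -> derivable_pt_lim f c (f' c)) ->
  (forall c, a < c < b -> f' c <= 0) ->
  f b <= f a.
Proof.
  intros Hab Hd Hneg.
  destruct (Req_dec a b) as [<-|Hne]; [lra|].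
  destruct (MVT_cor2 f f' a b ltac:(lra) Hd) as [c [Hmvt Hc]].
  pose proof (Hneg c Hc). nra.
Qed.

Lemma continuity_pt_lt (f : R -> R) (x rho : R) :
  continuity_pt f x -> f x < rho ->
  exists del, 0 < del /\ forall y, Rabs (y - x) < del -> f y < rho.
Proof.
  intros Hc Hlt.
  destruct (Hc (rho - f x) ltac:(lra)) as [del [Hdel Hnear]].
  exists del. split; [exact Hdel|]. intros y Hy.
  destruct (Req_dec y x) as [->|Hne]; [exact Hlt|].
  assert (Hfy : R_dist (f y) (f x) < rho - f x)
    by (apply Hnear; repeat split; [congruence | exact Hy]).
  unfold R_dist in Hfy. apply Rabs_def2 in Hfy. lra.
Qed.

Lemma first_crossing (phi : R -> R) (rho d0 t1 : R) :
  (forall t, 0 < t -> continuity_pt phi t) ->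
  0 < d0 -> (forall t, 0 <= t < d0 -> phi t < rho) -> 0 <= t1 -> rho <= phi t1 ->
  exists T, 0 < T <= t1 /\ (forall t, 0 <= t < T -> phi t < rho) /\ rho <= phi T.
Proof.
  intros Hc Hd0 Hini Ht1pos Ht1.
  assert (Hd0t1 : d0 <= t1).
  { destruct (Rle_dec d0 t1) as [|Hlt]; [assumption|].
    assert (phi t1 < rho) by (apply Hini; lra). lra. }
  (* [T] is the supremum of the times up to which [phi] has stayed below [rho]. *)
  set (E := fun s => 0 <= s <= t1 /\ forall tau, 0 <= tau <= s -> phi tau < rho).
  assert (HE0 : E (d0 / 2)) by (split; [lra | intros; apply Hini; lra]).
  destruct (completeness E) as [T [HTub HTlub]].
  { exists t1. intros s [Hs _]. lra. }
  { exists (d0 / 2). exact HE0. }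
  assert (HTt1 : T <= t1) by (apply HTlub; intros s [Hs _]; lra).
  assert (HT0 : d0 / 2 <= T) by (apply HTub; exact HE0).
  assert (Hbelow : forall tau, 0 <= tau < T -> phi tau < rho).
  { intros tau Htau.
    destruct (classic (exists s, E s /\ tau < s)) as [[s [[_ Hs] Hts]]|Hno].
    - apply Hs. lra.
    - assert (T <= tau); [|lra].
      apply HTlub. intros s Hs. apply Rnot_lt_le. intro Hlt. apply Hno. eauto. }
  exists T. split; [lra|]. split; [exact Hbelow|].
  apply Rnot_lt_le. intro HTlt.
  destruct (continuity_pt_lt phi T rho (Hc T ltac:(lra)) HTlt) as [del [Hdel Hnear]].
  destruct (Req_dec T t1) as [<-|Hne]; [lra|].
  set (s := Rmin (T + del / 2) t1).
  assert (Hs : E s).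
  { unfold s; split; [split; [apply Rmin_glb; lra | apply Rmin_r]|].
    intros tau Htau. destruct (Rlt_dec tau T); [apply Hbelow; lra|].
    apply Hnear. pose proof (Rmin_l (T + del / 2) t1). apply Rabs_def1; lra. }
  apply HTub in Hs. unfold s, Rmin in Hs. destruct (Rle_dec (T + del / 2) t1); lra.
Qed.

Lemma sublevel_forward_invariant (phi dphi : R -> R) (rho : R) :
  (forall t, 0 < t -> derivable_pt_lim phi t (dphi t)) ->
  (forall t, 0 < t -> phi t < rho -> dphi t <= 0) ->
  (exists d0, 0 < d0 /\ forall t, 0 <= t < d0 -> phi t < rho) ->
  forall t, 0 <= t -> phi t < rho.
Proof.
  intros Hd Hneg [d0 [Hd0 Hini]] t1 Ht1.
  apply Rnot_le_lt. intro Hexit.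
  assert (Hc : forall t, 0 < t -> continuity_pt phi t)
    by (intros t Ht; exact (derivable_continuous_pt phi t (exist _ _ (Hd t Ht)))).
  destruct (first_crossing phi rho d0 t1 Hc Hd0 Hini Ht1 Hexit)
    as [T [HT [Hbelow HphiT]]].
  set (s := Rmin d0 T / 2).
  assert (Hs : 0 < s < Rmin d0 T)
    by (unfold s; unfold Rmin; destruct (Rle_dec d0 T); lra).
  pose proof (Rmin_l d0 T). pose proof (Rmin_r d0 T).
  assert (phi T <= phi s); [|assert (phi s < rho) by (apply Hini; lra); lra].
  apply (le_of_derivative_nonpos phi dphi); [lra | intros c Hc'; apply Hd; lra |].
  intros c Hc'. apply Hneg; [lra | apply Hbelow; lra].
Qed.

Lemma exp_weighted_nonincreasing (phi dphi : R -> R) (alpha : R) :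
  (forall t, 0 < t -> derivable_pt_lim phi t (dphi t)) ->
  (forall t, 0 < t -> dphi t <= - alpha * phi t) ->
  forall t, 1 <= t -> phi t * exp (alpha * t) <= phi 1 * exp (alpha * 1).
Proof.
  intros Hd Hdecay t Ht.
  apply (le_of_derivative_nonpos (fun s => phi s * exp (alpha * s))
           (fun s => (dphi s + alpha * phi s) * exp (alpha * s))); [lra | |].
  - intros c Hc.
    replace ((dphi c + alpha * phi c) * exp (alpha * c))
      with (dphi c * exp (alpha * c) + phi c * (exp (alpha * c) * alpha)) by ring.
    apply (derivable_pt_lim_mult phi (fun s => exp (alpha * s))); [apply Hd; lra|].
    apply (derivable_pt_lim_comp (fun s => alpha * s) exp); [|apply derivable_pt_lim_exp].
    pose proof (derivable_pt_lim_scal id alpha c 1 (derivable_pt_lim_id c)) as Hlin.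
    rewrite Rmult_1_r in Hlin. exact Hlin.
  - intros c Hc. pose proof (Hdecay c ltac:(lra)). pose proof (exp_pos (alpha * c)). nra.
Qed.

Lemma exp_decay_eventually_lt (phi dphi : R -> R) (rho alpha : R) :
  0 < alpha ->
  (forall t, 0 < t -> derivable_pt_lim phi t (dphi t)) ->
  (forall t, 0 <= t -> phi t < rho) ->
  (forall t, 0 < t -> dphi t <= - alpha * phi t) ->
  forall eps, 0 < eps -> exists T, 0 <= T /\ forall t, T <= t -> phi t < eps.
Proof.
  intros Ha Hd Hbound Hdecay eps Heps.
  set (C := Rabs (rho * exp alpha)).
  assert (HC : 0 <= C / (alpha * eps))
    by (apply Rmult_le_pos; [apply Rabs_pos | left; apply Rinv_0_lt_compat; nra]).
  exists (1 + C / (alpha * eps)). split; [lra|]. intros t Ht.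
  destruct (Rle_dec (phi t) 0) as [|Hpos]; [lra|].
  assert (Hweighted : phi t * exp (alpha * t) <= C).
  { apply Rle_trans with (phi 1 * exp (alpha * 1));
      [apply (exp_weighted_nonincreasing _ dphi); auto; lra|].
    rewrite Rmult_1_r. apply Rle_trans with (rho * exp alpha); [|apply Rle_abs].
    pose proof (Hbound 1 ltac:(lra)). pose proof (exp_pos alpha). nra. }
  assert (HCt : C <= eps * (alpha * t)).
  { replace C with (alpha * eps * (C / (alpha * eps))) by (field; lra).
    replace (eps * (alpha * t)) with (alpha * eps * t) by ring.
    apply Rmult_le_compat_l; nra. }
  pose proof (exp_ineq1_le (alpha * t)).
  assert (phi t * (1 + alpha * t) <= phi t * exp (alpha * t)) by (apply Rmult_le_compat_l; lra).
  apply Rmult_lt_reg_r with (1 + alpha * t); nra.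
Qed.

Lemma dist4_triangle B I M N B1 I1 M1 N1 B0 I0 M0 N0 :
  dist4 B I M N B0 I0 M0 N0 <=
  dist4 B I M N B1 I1 M1 N1 + dist4 B1 I1 M1 N1 B0 I0 M0 N0.
Proof.
  unfold dist4.
  pose proof (R_dist_tri B B0 B1). pose proof (R_dist_tri I I0 I1).
  pose proof (R_dist_tri M M0 M1). pose proof (R_dist_tri N N0 N1).
  unfold R_dist in *. lra.
Qed.

(** * A Lyapunov criterion for (S) *)

Section LyapunovCriterion.

Variables b lam gam m mu r n p h beta delta e : R.
Variables B0 I0 M0 N0 : R.
Variables V dV : R -> R -> R -> R -> R.
Variables alpha rho0 : R.

Local Notation solution := (is_solution b lam gam m mu r n p h beta delta e).

Hypothesis V_derivative : forall Bf If Mf Nf, solution Bf If Mf Nf ->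
  forall t, 0 < t -> derivable_pt_lim (fun s => V (Bf s) (If s) (Mf s) (Nf s)) t
                       (dV (Bf t) (If t) (Mf t) (Nf t)).
Hypothesis V_nonneg : forall B I M N, inD0 B I M N -> 0 <= V B I M N.
Hypothesis V_small_near : forall rho, 0 < rho -> exists d, 0 < d /\
  forall B I M N, inD0 B I M N -> dist4 B I M N B0 I0 M0 N0 < d -> V B I M N < rho.
Hypothesis V_coercive : forall eps, 0 < eps -> exists rho, 0 < rho /\
  forall B I M N, inD0 B I M N -> V B I M N < rho -> dist4 B I M N B0 I0 M0 N0 < eps.
Hypothesis alpha_pos : 0 < alpha.
Hypothesis rho0_pos : 0 < rho0.
Hypothesis dV_le : forall B I M N, inD0 B I M N -> V B I M N < rho0 ->
  dV B I M N <= - alpha * V B I M N.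

Lemma solution_trapped_in_sublevel rho : 0 < rho -> rho <= rho0 ->
  exists dlt, 0 < dlt /\ forall Bf If Mf Nf, solution Bf If Mf Nf ->
    dist4 (Bf 0) (If 0) (Mf 0) (Nf 0) B0 I0 M0 N0 < dlt ->
    forall t, 0 <= t -> V (Bf t) (If t) (Mf t) (Nf t) < rho.
Proof.
  intros Hrho Hrho0.
  destruct (V_small_near rho Hrho) as [d [Hd Hnear]].
  exists (d / 2). split; [lra|].
  intros Bf If Mf Nf Hsol Hstart.
  pose proof Hsol as [Hdom [_ Hcont]].
  apply (sublevel_forward_invariant _ (fun t => dV (Bf t) (If t) (Mf t) (Nf t)));
    [exact (V_derivative _ _ _ _ Hsol) | |].
  - intros t Ht HVt.
    pose proof (dV_le _ _ _ _ (Hdom t ltac:(lra)) ltac:(lra)).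
    pose proof (V_nonneg _ _ _ _ (Hdom t ltac:(lra))). nra.
  - destruct (Hcont (d / 2) ltac:(lra)) as [d0 [Hd0 Hclose]].
    exists d0. split; [exact Hd0|]. intros t Ht.
    apply Hnear; [apply Hdom; lra|].
    pose proof (dist4_triangle (Bf t) (If t) (Mf t) (Nf t)
                  (Bf 0) (If 0) (Mf 0) (Nf 0) B0 I0 M0 N0).
    pose proof (Hclose t Ht). lra.
Qed.

Theorem lyapunov_loc_asympt_stable :
  loc_asympt_stable b lam gam m mu r n p h beta delta e B0 I0 M0 N0.
Proof.
  split.
  - intros eps Heps.
    destruct (V_coercive eps Heps) as [rhoE [HrhoE Hclose]].
    destruct (solution_trapped_in_sublevel (Rmin rhoE rho0)
                (Rmin_pos _ _ HrhoE rho0_pos) (Rmin_r _ _)) as [dlt [Hdlt Htrap]].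
    exists dlt. split; [exact Hdlt|].
    intros Bf If Mf Nf Hsol Hstart t Ht.
    pose proof (Htrap _ _ _ _ Hsol Hstart t Ht). pose proof (Rmin_l rhoE rho0).
    destruct Hsol as [Hdom _]. apply Hclose; [apply Hdom; exact Ht | lra].
  - destruct (solution_trapped_in_sublevel rho0 rho0_pos (Rle_refl _)) as [dlt [Hdlt Htrap]].
    exists dlt. split; [exact Hdlt|].
    intros Bf If Mf Nf Hsol Hstart eps Heps.
    destruct (V_coercive eps Heps) as [rhoE [HrhoE Hclose]].
    pose proof (Htrap _ _ _ _ Hsol Hstart) as Hbelow.
    pose proof Hsol as [Hdom _].
    destruct (exp_decay_eventually_lt _ (fun t => dV (Bf t) (If t) (Mf t) (Nf t)) rho0 alpha
                alpha_pos (V_derivative _ _ _ _ Hsol) Hbelow) with rhoE as [T [HT HafterT]];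
      [| exact HrhoE |].
    + intros t Ht. apply dV_le; [apply Hdom | apply Hbelow]; lra.
    + exists T. split; [exact HT|]. intros t Ht.
      apply Hclose; [apply Hdom; lra | exact (HafterT t Ht)].
Qed.

End LyapunovCriterion.

(** * A quadratic Lyapunov function of a stable 2x2 matrix *)

(* For a 2x2 matrix [A] with trace < 0 < det, [lyap2 A] is a quadratic Lyapunov
   function: with [lyap2_grad1], [lyap2_grad2] half its gradient, the derivative
   along [z' = A z] is [2 tr det |z|^2] ([lyap2_grad_linear]). *)
Definition lyap2 (a11 a12 a21 a22 x y : R) : R :=
  (a11 * a22 - a12 * a21) * (x * x + y * y)
  + (a22 * x - a12 * y) * (a22 * x - a12 * y) + (a21 * x - a11 * y) * (a21 * x - a11 * y).

Definition lyap2_grad1 (a11 a12 a21 a22 x y : R) : R :=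
  (a11 * a22 - a12 * a21 + a22 * a22 + a21 * a21) * x - (a12 * a22 + a11 * a21) * y.
Definition lyap2_grad2 (a11 a12 a21 a22 x y : R) : R :=
  - (a12 * a22 + a11 * a21) * x + (a11 * a22 - a12 * a21 + a12 * a12 + a11 * a11) * y.

Lemma lyap2_grad_linear a11 a12 a21 a22 x y :
  lyap2_grad1 a11 a12 a21 a22 x y * (a11 * x + a12 * y)
  + lyap2_grad2 a11 a12 a21 a22 x y * (a21 * x + a22 * y)
  = (a11 + a22) * (a11 * a22 - a12 * a21) * (x * x + y * y).
Proof. unfold lyap2_grad1, lyap2_grad2. ring. Qed.

Lemma lyap2_ge a11 a12 a21 a22 x y :
  (a11 * a22 - a12 * a21) * (x * x + y * y) <= lyap2 a11 a12 a21 a22 x y.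
Proof.
  unfold lyap2.
  pose proof (Rle_0_sqr (a22 * x - a12 * y)). pose proof (Rle_0_sqr (a21 * x - a11 * y)).
  unfold Rsqr in *. lra.
Qed.

Lemma lyap2_le a11 a12 a21 a22 x y :
  lyap2 a11 a12 a21 a22 x y <=
  ((a11 * a22 - a12 * a21) + 2 * (a11 * a11 + a12 * a12 + a21 * a21 + a22 * a22))
  * (x * x + y * y).
Proof.
  unfold lyap2.
  pose proof (Rle_0_sqr (a22 * x + a12 * y)). pose proof (Rle_0_sqr (a21 * x + a11 * y)).
  unfold Rsqr in *. nra.
Qed.

Section Lyap2Gradient.

Variables a11 a12 a21 a22 : R.
Let det := a11 * a22 - a12 * a21.
Let P := det + (a11 * a11 + a12 * a12 + a21 * a21 + a22 * a22).
Hypothesis det_pos : 0 < det.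

Let Rabs_cross_le : Rabs (a12 * a22 + a11 * a21) <= P.
Proof.
  unfold P, det in *. apply Rabs_le.
  pose proof (Rle_0_sqr (a12 - a22)). pose proof (Rle_0_sqr (a12 + a22)).
  pose proof (Rle_0_sqr (a11 - a21)). pose proof (Rle_0_sqr (a11 + a21)).
  unfold Rsqr in *. split; lra.
Qed.

Lemma lyap2_grad1_abs_le x y :
  Rabs (lyap2_grad1 a11 a12 a21 a22 x y) <= P * (Rabs x + Rabs y).
Proof.
  replace (lyap2_grad1 a11 a12 a21 a22 x y) with
    ((det + a22 * a22 + a21 * a21) * x + (- (a12 * a22 + a11 * a21)) * y)
    by (unfold lyap2_grad1, det; ring).
  apply Rabs_lin_le; [|rewrite Rabs_Ropp; exact Rabs_cross_le].
  rewrite Rabs_pos_eq; unfold P, det in *; nra.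
Qed.

Lemma lyap2_grad2_abs_le x y :
  Rabs (lyap2_grad2 a11 a12 a21 a22 x y) <= P * (Rabs x + Rabs y).
Proof.
  replace (lyap2_grad2 a11 a12 a21 a22 x y) with
    ((- (a12 * a22 + a11 * a21)) * x + (det + a12 * a12 + a11 * a11) * y)
    by (unfold lyap2_grad2, det; ring).
  apply Rabs_lin_le; [rewrite Rabs_Ropp; exact Rabs_cross_le|].
  rewrite Rabs_pos_eq; unfold P, det in *; nra.
Qed.

End Lyap2Gradient.

Definition lyapE5 (K a11 a12 a21 a22 I5 M5 N5 B I M N : R) : R :=
  B + K * ((I - I5) * (I - I5)) + lyap2 a11 a12 a21 a22 (M - M5) (N - N5).

Definition lyapE5_deriv (K a11 a12 a21 a22 I5 M5 N5 B I M N FB FI FM FN : R) : R :=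
  FB + K * (2 * (I - I5) * FI)
  + 2 * lyap2_grad1 a11 a12 a21 a22 (M - M5) (N - N5) * FM
  + 2 * lyap2_grad2 a11 a12 a21 a22 (M - M5) (N - N5) * FN.

Lemma lyapE5_derivable K a11 a12 a21 a22 I5 M5 N5 (Bf If Mf Nf : R -> R) t FB FI FM FN :
  derivable_pt_lim Bf t FB -> derivable_pt_lim If t FI ->
  derivable_pt_lim Mf t FM -> derivable_pt_lim Nf t FN ->
  derivable_pt_lim (fun s => lyapE5 K a11 a12 a21 a22 I5 M5 N5 (Bf s) (If s) (Mf s) (Nf s)) t
    (lyapE5_deriv K a11 a12 a21 a22 I5 M5 N5 (Bf t) (If t) (Mf t) (Nf t) FB FI FM FN).
Proof.
  intros HB HI HM HN. unfold lyapE5, lyap2.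
  eapply (eq_ind _ (derivable_pt_lim _ t)).
  - repeat first [ apply derivable_pt_lim_plus | apply derivable_pt_lim_minus
                 | apply derivable_pt_lim_opp | apply derivable_pt_lim_mult
                 | apply derivable_pt_lim_const | eassumption ].
  - unfold lyapE5_deriv, lyap2_grad1, lyap2_grad2. ring.
Qed.

Section LyapE5Bounds.

Variables K a11 a12 a21 a22 I5 M5 N5 : R.
Let det := a11 * a22 - a12 * a21.
Hypothesis K_pos : 0 < K.
Hypothesis det_pos : 0 < det.

Local Notation V := (lyapE5 K a11 a12 a21 a22 I5 M5 N5).

Lemma lyapE5_nonneg B I M N : 0 <= B -> 0 <= V B I M N.
Proof.
  intro HB. unfold lyapE5.
  pose proof (lyap2_ge a11 a12 a21 a22 (M - M5) (N - N5)).
  assert (0 <= K * ((I - I5) * (I - I5))) by (apply Rmult_le_pos; [lra | apply Rle_0_sqr]).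
  assert (0 <= det * ((M - M5) * (M - M5) + (N - N5) * (N - N5)))
    by (apply Rmult_le_pos; [lra | apply Rplus_le_le_0_compat; apply Rle_0_sqr]).
  unfold det in *. lra.
Qed.

Lemma lyapE5_box r B I M N : 0 < r -> 0 <= B ->
  V B I M N <= r -> V B I M N <= K * (r * r) -> V B I M N <= det * (r * r) ->
  B <= r /\ Rabs (I - I5) <= r /\ Rabs (M - M5) <= r /\ Rabs (N - N5) <= r.
Proof.
  intros Hr HB HVr HVK HVdet. unfold lyapE5 in *.
  pose proof (lyap2_ge a11 a12 a21 a22 (M - M5) (N - N5)).
  set (v := I - I5) in *. set (x := M - M5) in *. set (y := N - N5) in *.
  assert (Hv : v * v <= r * r).
  { apply Rmult_le_reg_l with K; [exact K_pos|]. unfold det in *. nra. }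
  assert (Hxy : x * x + y * y <= r * r).
  { apply Rmult_le_reg_l with det; [exact det_pos|]. unfold det in *. nra. }
  assert (0 <= K * (v * v)) by (apply Rmult_le_pos; [lra | apply Rle_0_sqr]).
  assert (0 <= det * (x * x + y * y))
    by (apply Rmult_le_pos; [lra | apply Rplus_le_le_0_compat; apply Rle_0_sqr]).
  unfold det in *.
  split; [lra|]. repeat split; apply Rabs_le; split; nra.
Qed.

Lemma lyapE5_coercive eps : 0 < eps -> exists rho, 0 < rho /\
  forall B I M N, 0 <= B -> V B I M N < rho -> dist4 B I M N 0 I5 M5 N5 < eps.
Proof.
  intro Heps. set (r := eps / 5).
  exists (Rmin r (Rmin (K * (r * r)) (det * (r * r)))).
  assert (Hr : 0 < r) by (unfold r; lra).
  split; [repeat apply Rmin_pos; repeat apply Rmult_lt_0_compat; lra|].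
  intros B I M N HB HV.
  pose proof (Rmin_l r (Rmin (K * (r * r)) (det * (r * r)))).
  pose proof (Rmin_r r (Rmin (K * (r * r)) (det * (r * r)))).
  pose proof (Rmin_l (K * (r * r)) (det * (r * r))).
  pose proof (Rmin_r (K * (r * r)) (det * (r * r))).
  destruct (lyapE5_box r B I M N) as [HBr [Hv [Hx Hy]]]; try lra.
  unfold dist4. rewrite Rminus_0_r, (Rabs_pos_eq B) by exact HB. unfold r in *. lra.
Qed.

Lemma lyapE5_small_near rho : 0 < rho -> exists d, 0 < d /\
  forall B I M N, 0 <= B -> dist4 B I M N 0 I5 M5 N5 < d -> V B I M N < rho.
Proof.
  intro Hrho.
  set (Wb := det + 2 * (a11 * a11 + a12 * a12 + a21 * a21 + a22 * a22)).
  assert (HWb : 0 < Wb) by (unfold Wb; nra).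
  set (C := 1 + K + 2 * Wb).
  exists (Rmin 1 (rho / C)).
  split; [apply Rmin_pos; [lra | unfold C; apply Rdiv_lt_0_compat; lra]|].
  intros B I M N HB Hd.
  assert (Hd1 := Rmin_l 1 (rho / C)). assert (Hd2 := Rmin_r 1 (rho / C)).
  set (d := Rmin 1 (rho / C)) in *.
  assert (HCd : C * d <= rho).
  { apply Rmult_le_reg_r with (/ C); [apply Rinv_0_lt_compat; unfold C; lra|].
    replace (C * d * / C) with d by (field; unfold C; lra). exact Hd2. }
  unfold dist4 in Hd. rewrite Rminus_0_r, (Rabs_pos_eq B) in Hd by exact HB.
  pose proof (Rabs_pos (I - I5)). pose proof (Rabs_pos (M - M5)). pose proof (Rabs_pos (N - N5)).
  pose proof (Rsqr_abs (I - I5)). pose proof (Rsqr_abs (M - M5)). pose proof (Rsqr_abs (N - N5)).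
  unfold Rsqr in *.
  assert (Hv : (I - I5) * (I - I5) <= d) by nra.
  assert (Hxy : (M - M5) * (M - M5) + (N - N5) * (N - N5) <= 2 * d) by nra.
  pose proof (lyap2_le a11 a12 a21 a22 (M - M5) (N - N5)) as HW. fold det Wb in HW.
  assert (K * ((I - I5) * (I - I5)) <= K * d) by (apply Rmult_le_compat_l; lra).
  assert (Wb * ((M - M5) * (M - M5) + (N - N5) * (N - N5)) <= Wb * (2 * d))
    by (apply Rmult_le_compat_l; lra).
  unfold lyapE5, C in *. lra.
Qed.

Lemma lyapE5_deriv_dominated c1 c2 alpha D B I M N :
  0 <= B -> 0 <= alpha -> alpha <= c1 -> alpha * K <= 1 ->
  alpha * (det + 2 * (a11 * a11 + a12 * a12 + a21 * a21 + a22 * a22)) <= c2 ->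
  D <= - c1 * B - (I - I5) * (I - I5)
       - c2 * ((Rabs (M - M5) + Rabs (N - N5)) * (Rabs (M - M5) + Rabs (N - N5))) ->
  D <= - alpha * V B I M N.
Proof.
  intros HB Ha Hc1 HK Hc2 HD. unfold lyapE5.
  set (Wb := det + 2 * (a11 * a11 + a12 * a12 + a21 * a21 + a22 * a22)) in *.
  pose proof (lyap2_le a11 a12 a21 a22 (M - M5) (N - N5)) as HW. fold det Wb in HW.
  set (W := lyap2 a11 a12 a21 a22 (M - M5) (N - N5)) in *.
  set (s := Rabs (M - M5) + Rabs (N - N5)) in *.
  assert (Hs : (M - M5) * (M - M5) + (N - N5) * (N - N5) <= s * s).
  { pose proof (Rsqr_abs (M - M5)). pose proof (Rsqr_abs (N - N5)).
    pose proof (Rabs_pos (M - M5)). pose proof (Rabs_pos (N - N5)). unfold s, Rsqr in *. nra. }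
  assert (HWb : 0 <= Wb) by (unfold Wb; nra).
  assert (HaW : alpha * W <= c2 * (s * s)).
  { apply Rle_trans with (alpha * (Wb * (s * s))).
    - apply Rmult_le_compat_l; [exact Ha|]. apply Rle_trans with (1 := HW).
      apply Rmult_le_compat_l; assumption.
    - rewrite <- Rmult_assoc. apply Rmult_le_compat_r; [apply Rle_0_sqr | exact Hc2]. }
  assert (alpha * B <= c1 * B) by (apply Rmult_le_compat_r; assumption).
  assert (alpha * (K * ((I - I5) * (I - I5))) <= (I - I5) * (I - I5)).
  { rewrite <- Rmult_assoc. pose proof (Rle_0_sqr (I - I5)). unfold Rsqr in *. nra. }
  lra.
Qed.

End LyapE5Bounds.

(** * Its derivative near E5 *)

Section LocalEstimate.

Variables b lam gam m beta delta e q I5 M5 N5 : R.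
Variables a11 a12 a21 a22 : R.
Let det := a11 * a22 - a12 * a21.
Let P := det + (a11 * a11 + a12 * a12 + a21 * a21 + a22 * a22).
Let tau := - (a11 + a22) * det.
Let k := gam * I5 + m + lam * N5 - b / I5.
Hypotheses (hb : 0 < b) (hlam : 0 < lam) (hgam : 0 < gam) (hbeta : 0 < beta)
  (hdelta : 0 < delta) (he : 0 < e) (hq : 0 < q)
  (hI5 : 0 < I5) (hM5 : 0 <= M5) (hN5 : 0 <= N5)
  (det_pos : 0 < det) (trace_neg : a11 + a22 < 0).

Variables r0 B I M N : R.
Let v := I - I5.
Let x := M - M5.
Let y := N - N5.
Let s := Rabs x + Rabs y.
Hypotheses (hr0 : 0 < r0) (hr0I5 : r0 <= I5 / 2)
  (hB : 0 <= B <= r0) (hv : Rabs v <= r0) (hx : Rabs x <= r0) (hy : Rabs y <= r0).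

Let sg := q / (B + I).
Let g1 := lyap2_grad1 a11 a12 a21 a22 x y.
Let g2 := lyap2_grad2 a11 a12 a21 a22 x y.

(* The vector field of (S) in the deviations from E5 (see [fI_near_E5] etc.). *)
Let FB := B * (b / (B + I) - lam * N - gam * I - m).
Let FI := - b * I / (I5 * (B + I)) * (B + v) + B * (lam * N + gam * I).
Let FM := a11 * x + a12 * y - q * x * (x + y) - delta * x * y
          + sg * (B + v) * M * (M + N) - beta * v * M - e * B * M.
Let FN := a21 * x + a22 * y - q * y * (x + y) + delta * x * y
          + sg * (B + v) * N * (M + N) + beta * v * M - e * B * N.

Let cg := lam + gam + 2 * b / (I5 * I5).
Let Cv := lam * (N5 + I5) + 2 * gam * I5 + b / I5.
Let Cu := 4 * P * ((M5 + I5) + (N5 + I5)) * (2 * q / I5 * (M5 + N5 + I5) + e).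
Let C3 := P * (2 * q / I5 * (M5 + N5 + I5) * ((M5 + I5) + (N5 + I5)) + 2 * beta * (M5 + I5)).

Let hv' : - r0 <= v <= r0.  Proof. apply Rabs_le_inv in hv. lra. Qed.
Let hx' : - r0 <= x <= r0.  Proof. apply Rabs_le_inv in hx. lra. Qed.
Let hy' : - r0 <= y <= r0.  Proof. apply Rabs_le_inv in hy. lra. Qed.

Lemma denominator_bounds : I5 / 2 <= I /\ I5 / 2 <= B + I <= 2 * I5.
Proof. pose proof hv'. unfold v in *. lra. Qed.

Lemma healthy_rate_le : b / (B + I) - lam * N - gam * I - m <= - k + r0 * cg.
Proof.
  destruct denominator_bounds as [_ [HD1 HD2]]. pose proof hv'. pose proof hy'.
  assert (Hfrac : b / (B + I) - b / I5 <= r0 * (2 * b / (I5 * I5))).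
  { replace (b / (B + I) - b / I5) with (b * (- (B + v)) / (I5 * (B + I)))
      by (unfold v; field; lra).
    apply Rle_trans with (b * r0 / (I5 * (I5 / 2))).
    - unfold Rdiv. apply Rle_trans with (b * r0 * / (I5 * (B + I))).
      + apply Rmult_le_compat_r; [left; apply Rinv_0_lt_compat; nra | nra].
      + apply Rmult_le_compat_l; [nra|]. apply Rinv_le_contravar; nra.
    - right. field. lra. }
  unfold k, cg, y, v in *. nra.
Qed.

Lemma infected_term_le : 2 * v * FI <= - (b / (2 * I5)) * (v * v) + 2 * B * (r0 * Cv).
Proof.
  destruct denominator_bounds as [HI [HD1 HD2]]. pose proof hv'. pose proof hy'.
  set (c := b / I5). assert (Hc : 0 < c) by (unfold c; apply Rdiv_lt_0_compat; lra).
  set (w := I / (B + I)).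
  assert (Hw : 1 / 4 <= w <= 1).
  { assert (Hwe : w * (B + I) = I) by (unfold w; field; lra). split; nra. }
  set (Z := lam * N + gam * I - c * w).
  assert (Hsplit : 2 * v * FI = - 2 * c * w * (v * v) + 2 * B * (v * Z))
    by (unfold FI, Z, c, w, v; field; lra).
  assert (HcZ : 0 <= c * w <= c) by (split; nra).
  assert (HZ : Rabs Z <= lam * (N5 + I5) + 2 * gam * I5 + c).
  { apply Rabs_le. unfold Z, y in *. split; nra. }
  assert (HvZ : v * Z <= r0 * (lam * (N5 + I5) + 2 * gam * I5 + c)).
  { apply Rle_trans with (Rabs (v * Z)); [apply Rle_abs|]. rewrite Rabs_mult.
    apply Rmult_le_compat; [apply Rabs_pos | apply Rabs_pos | exact hv | exact HZ]. }
  rewrite Hsplit. unfold Cv. fold c.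
  assert (B * (v * Z) <= B * (r0 * (lam * (N5 + I5) + 2 * gam * I5 + c)))
    by (apply Rmult_le_compat_l; lra).
  assert (0 <= c * (v * v) * (2 * w - 1 / 2))
    by (apply Rmult_le_pos; [apply Rmult_le_pos; [lra | apply Rle_0_sqr] | lra]).
  replace (b / (2 * I5)) with (c / 2) by (unfold c; field; lra).
  nra.
Qed.

Let s_bounds : 0 <= s <= 2 * r0 /\ Rabs x <= s /\ Rabs y <= s /\ Rabs (x + y) <= s.
Proof.
  pose proof (Rabs_pos x). pose proof (Rabs_pos y). pose proof (Rabs_triang x y).
  unfold s. lra.
Qed.

Let grad_bounds : Rabs g1 <= P * s /\ Rabs g2 <= P * s.
Proof. split; [apply lyap2_grad1_abs_le | apply lyap2_grad2_abs_le]; exact det_pos. Qed.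

Let P_pos : 0 < P.
Proof. unfold P. nra. Qed.

Lemma quadratic_remainder_le :
  g1 * (- q * x * (x + y) - delta * x * y) + g2 * (- q * y * (x + y) + delta * x * y)
  <= 4 * P * (q + delta) * r0 * (s * s).
Proof.
  destruct s_bounds as [Hs [Hxs [Hys Hxys]]]. destruct grad_bounds as [Hg1 Hg2].
  assert (Hquad : forall u, Rabs u <= s ->
            Rabs (- q * u * (x + y)) + Rabs (delta * x * y) <= (q + delta) * (s * s)).
  { intros u Hu. rewrite !Rabs_mult, Rabs_Ropp, (Rabs_pos_eq q), (Rabs_pos_eq delta) by lra.
    pose proof (Rabs_pos u). pose proof (Rabs_pos x). pose proof (Rabs_pos y).
    pose proof (Rabs_pos (x + y)).
    assert (Rabs u * Rabs (x + y) <= s * s) by (apply Rmult_le_compat; lra).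
    assert (Rabs x * Rabs y <= s * s) by (apply Rmult_le_compat; lra). nra. }
  pose proof (Hquad x Hxs) as Hqx. pose proof (Hquad y Hys) as Hqy.
  assert (Habs : forall g u w, Rabs g <= P * s -> Rabs u + Rabs w <= (q + delta) * (s * s) ->
            g * (u + w) <= P * s * ((q + delta) * (s * s))).
  { intros g u w Hg Huw. apply Rle_trans with (Rabs (g * (u + w))); [apply Rle_abs|].
    rewrite Rabs_mult. apply Rmult_le_compat; try apply Rabs_pos; [exact Hg|].
    eapply Rle_trans; [apply Rabs_triang | exact Huw]. }
  rewrite <- (Rabs_Ropp (delta * x * y)) in Hqx.
  pose proof (Habs g1 (- q * x * (x + y)) (- (delta * x * y)) Hg1 Hqx).
  pose proof (Habs g2 (- q * y * (x + y)) (delta * x * y) Hg2 Hqy).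
  assert (0 <= P * (q + delta) * (s * s))
    by (apply Rmult_le_pos; [nra | apply Rle_0_sqr]).
  assert (P * (q + delta) * (s * s) * s <= P * (q + delta) * (s * s) * (2 * r0))
    by (apply Rmult_le_compat_l; lra).
  nra.
Qed.

Lemma state_abs_le :
  Rabs M <= M5 + I5 /\ Rabs N <= N5 + I5 /\ Rabs (M + N) <= M5 + N5 + I5.
Proof. pose proof hx'. pose proof hy'. unfold x, y in *. repeat split; apply Rabs_le; lra. Qed.

Lemma coupling_bounds : 0 < sg <= 2 * q / I5.
Proof.
  destruct denominator_bounds as [_ [HD1 _]]. unfold sg. split.
  - apply Rdiv_lt_0_compat; lra.
  - replace (2 * q / I5) with (q / (I5 / 2)) by (field; lra).
    unfold Rdiv. apply Rmult_le_compat_l; [lra | apply Rinv_le_contravar; lra].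
Qed.

Let flux_abs_le : Rabs (g1 * M + g2 * N) <= P * s * ((M5 + I5) + (N5 + I5)).
Proof.
  destruct state_abs_le as [HM [HN _]]. destruct grad_bounds as [Hg1 Hg2].
  rewrite Rmult_plus_distr_l. eapply Rle_trans; [apply Rabs_triang|].
  apply Rplus_le_compat; apply Rabs_mult_le; assumption.
Qed.

Lemma bee_coupling_le : 2 * B * ((g1 * M + g2 * N) * (sg * (M + N) - e)) <= B * (r0 * Cu).
Proof.
  destruct state_abs_le as [_ [_ HS]]. destruct coupling_bounds as [Hsg0 Hsg].
  destruct s_bounds as [Hs _].
  assert (Hrate : Rabs (sg * (M + N) - e) <= 2 * q / I5 * (M5 + N5 + I5) + e).
  { unfold Rminus. eapply Rle_trans; [apply Rabs_triang|]. rewrite Rabs_Ropp.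
    apply Rplus_le_compat; [apply Rabs_mult_le; [rewrite Rabs_pos_eq; lra | exact HS]|].
    rewrite Rabs_pos_eq; lra. }
  pose proof (Rabs_mult_le _ _ _ _ flux_abs_le Hrate) as Hprod.
  apply Rle_trans with (2 * B * (P * s * ((M5 + I5) + (N5 + I5))
                                 * (2 * q / I5 * (M5 + N5 + I5) + e))).
  - apply Rmult_le_compat_l; [lra|]. eapply Rle_trans; [apply Rle_abs | exact Hprod].
  - set (X := P * ((M5 + I5) + (N5 + I5)) * (2 * q / I5 * (M5 + N5 + I5) + e)).
    assert (HX : 0 <= X).
    { apply Rmult_le_pos; [apply Rmult_le_pos; lra|].
      assert (0 <= 2 * q / I5) by (apply Rmult_le_pos; [lra | left; apply Rinv_0_lt_compat; lra]).
      nra. }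
    replace (B * (r0 * Cu)) with ((4 * r0) * (B * X)) by (unfold Cu, X; ring).
    replace (2 * B * (P * s * (M5 + I5 + (N5 + I5)) * (2 * q / I5 * (M5 + N5 + I5) + e)))
      with ((2 * s) * (B * X)) by (unfold X; ring).
    apply Rmult_le_compat_r; [apply Rmult_le_pos|]; lra.
Qed.

Lemma infection_coupling_le :
  2 * v * (sg * (M + N) * (g1 * M + g2 * N) + beta * M * (g2 - g1)) <= 2 * (Rabs v * (C3 * s)).
Proof.
  destruct state_abs_le as [HM [_ HS]]. destruct coupling_bounds as [Hsg0 Hsg].
  destruct grad_bounds as [Hg1 Hg2].
  assert (Hsum : Rabs (sg * (M + N) * (g1 * M + g2 * N) + beta * M * (g2 - g1)) <= C3 * s).
  { replace (C3 * s) with (2 * q / I5 * (M5 + N5 + I5) * (P * s * ((M5 + I5) + (N5 + I5)))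
                           + beta * (M5 + I5) * (P * s + P * s)) by (unfold C3; ring).
    eapply Rle_trans; [apply Rabs_triang|]. apply Rplus_le_compat.
    - apply Rabs_mult_le; [|exact flux_abs_le].
      apply Rabs_mult_le; [rewrite Rabs_pos_eq; lra | exact HS].
    - apply Rabs_mult_le; [apply Rabs_mult_le; [rewrite Rabs_pos_eq; lra | exact HM]|].
      unfold Rminus. eapply Rle_trans; [apply Rabs_triang|]. rewrite Rabs_Ropp. lra. }
  pose proof (Rabs_mult_le _ _ _ _ (Rle_refl (Rabs v)) Hsum) as Hprod.
  pose proof (Rle_abs (v * (sg * (M + N) * (g1 * M + g2 * N) + beta * M * (g2 - g1)))). lra.
Qed.

Lemma mite_term_le :
  2 * g1 * FM + 2 * g2 * FN <=
  - tau * (s * s) + 8 * P * (q + delta) * r0 * (s * s) + B * (r0 * Cu) + 2 * (Rabs v * (C3 * s)).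
Proof.
  assert (Hdecomp : 2 * g1 * FM + 2 * g2 * FN =
    2 * (g1 * (a11 * x + a12 * y) + g2 * (a21 * x + a22 * y))
    + 2 * (g1 * (- q * x * (x + y) - delta * x * y) + g2 * (- q * y * (x + y) + delta * x * y))
    + 2 * B * ((g1 * M + g2 * N) * (sg * (M + N) - e))
    + 2 * v * (sg * (M + N) * (g1 * M + g2 * N) + beta * M * (g2 - g1)))
    by (unfold FM, FN; ring).
  pose proof (lyap2_grad_linear a11 a12 a21 a22 x y) as Hlinear. fold g1 g2 det in Hlinear.
  rewrite Hdecomp, Hlinear.
  assert (Hs2 : s * s <= 2 * (x * x + y * y)).
  { pose proof (Rsqr_abs x). pose proof (Rsqr_abs y).
    pose proof (Rle_0_sqr (Rabs x - Rabs y)). unfold s, Rsqr in *. nra. }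
  assert (Htau : 0 < tau) by (unfold tau; nra).
  assert (Hlin : 2 * ((a11 + a22) * det * (x * x + y * y)) <= - tau * (s * s)).
  { unfold tau in *. nra. }
  pose proof quadratic_remainder_le. pose proof bee_coupling_le. pose proof infection_coupling_le.
  lra.
Qed.

Lemma lyapE5_deriv_le K : 0 < K -> 4 * C3 * C3 + tau <= K * (b / (2 * I5)) * tau ->
  r0 * cg <= k / 4 -> r0 * (2 * K * Cv) <= k / 4 -> r0 * Cu <= k / 4 ->
  r0 * (8 * P * (q + delta)) <= tau / 4 ->
  lyapE5_deriv K a11 a12 a21 a22 I5 M5 N5 B I M N FB FI FM FN
  <= - (k / 4) * B - v * v - tau / 2 * (s * s).
Proof.
  intros HK HKbig Hcg HCv HCu HP.
  unfold lyapE5_deriv. fold v x y g1 g2.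
  assert (HFB : FB <= B * (- k + k / 4)).
  { unfold FB. apply Rmult_le_compat_l; [lra|]. pose proof healthy_rate_le. lra. }
  assert (HFI : K * (2 * v * FI) <= K * (- (b / (2 * I5)) * (v * v) + 2 * B * (r0 * Cv)))
    by (apply Rmult_le_compat_l; [lra | exact infected_term_le]).
  pose proof mite_term_le as Hmite.
  assert (Htau : 0 < tau) by (unfold tau; nra).
  pose proof (cross_term_absorb (K * (b / (2 * I5))) C3 tau (Rabs v) s Htau HKbig (Rabs_pos v))
    as Habsorb.
  pose proof (Rsqr_abs v) as Hvsq. unfold Rsqr in Hvsq. rewrite <- Hvsq in Habsorb.
  assert (B * (r0 * (2 * K * Cv)) <= B * (k / 4)) by (apply Rmult_le_compat_l; lra).
  assert (B * (r0 * Cu) <= B * (k / 4)) by (apply Rmult_le_compat_l; lra).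
  assert (s * s * (r0 * (8 * P * (q + delta))) <= s * s * (tau / 4))
    by (apply Rmult_le_compat_l; [apply Rle_0_sqr | exact HP]).
  nra.
Qed.

End LocalEstimate.

(* The mite block of the Jacobian at E5: condition c2 says its trace is negative,
   condition c3 that its determinant is positive. *)
Definition mite_jac11 (r n p h beta delta I5 M5 N5 : R) : R :=
  r - n - p * (2 * M5 + N5) / (h * I5) - beta * I5 - delta * N5.
Definition mite_jac12 (r p h delta I5 M5 : R) : R := r - p * M5 / (h * I5) - delta * M5.
Definition mite_jac21 (p h beta delta I5 N5 : R) : R := beta * I5 - p * N5 / (h * I5) + delta * N5.
Definition mite_jac22 (n p h delta I5 M5 N5 : R) : R :=
  delta * M5 - n - p * (M5 + 2 * N5) / (h * I5).

Lemma fB_factor b lam gam m mu r n p h beta delta e B I M N :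
  fB b lam gam m mu r n p h beta delta e B I M N = B * (b / (B + I) - lam * N - gam * I - m).
Proof. unfold fB, Rdiv. ring. Qed.

Section EquilibriumE5.

Variables b lam gam m mu r n p h beta delta e I5 M5 N5 : R.
Hypotheses (hb : 0 < b) (hlam : 0 < lam) (hgam : 0 < gam)
  (hp : 0 < p) (hh : 0 < h) (hbeta : 0 < beta)
  (hdelta : 0 < delta) (he : 0 < e) (hI5 : 0 < I5) (hM5 : 0 <= M5) (hN5 : 0 <= N5).
Hypothesis heq : is_equilibrium b lam gam m mu r n p h beta delta e 0 I5 M5 N5.

Local Notation FB := (fB b lam gam m mu r n p h beta delta e).
Local Notation FI := (fI b lam gam m mu r n p h beta delta e).
Local Notation FM := (fM b lam gam m mu r n p h beta delta e).
Local Notation FN := (fN b lam gam m mu r n p h beta delta e).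

Let a11 := mite_jac11 r n p h beta delta I5 M5 N5.
Let a12 := mite_jac12 r p h delta I5 M5.
Let a21 := mite_jac21 p h beta delta I5 N5.
Let a22 := mite_jac22 n p h delta I5 M5 N5.
Let q := p / (h * I5).

Lemma E5_death_rate : m + mu = b / I5.
Proof.
  destruct heq as [_ [HI _]]. unfold fI in HI.
  replace (b * I5 / (0 + I5)) with b in HI by (field; lra).
  apply Rmult_eq_reg_r with I5; [|lra]. field_simplify; lra.
Qed.

Lemma fI_near_E5 B I M N : B + I <> 0 ->
  FI B I M N = - b * I / (I5 * (B + I)) * (B + (I - I5)) + B * (lam * N + gam * I).
Proof. intro HD. unfold fI. rewrite E5_death_rate. field. lra. Qed.

Lemma fM_near_E5 B I M N : B + I <> 0 ->
  FM B I M N = a11 * (M - M5) + a12 * (N - N5) - q * (M - M5) * ((M - M5) + (N - N5))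
    - delta * (M - M5) * (N - N5) + q / (B + I) * (B + (I - I5)) * M * (M + N)
    - beta * (I - I5) * M - e * B * M.
Proof.
  intro HD. destruct heq as [_ [_ [HM _]]].
  replace (FM B I M N) with (FM B I M N - FM 0 I5 M5 N5) by (rewrite HM; ring).
  unfold fM, a11, a12, q, mite_jac11, mite_jac12. field. repeat split; lra.
Qed.

Lemma fN_near_E5 B I M N : B + I <> 0 ->
  FN B I M N = a21 * (M - M5) + a22 * (N - N5) - q * (N - N5) * ((M - M5) + (N - N5))
    + delta * (M - M5) * (N - N5) + q / (B + I) * (B + (I - I5)) * N * (M + N)
    + beta * (I - I5) * M - e * B * N.
Proof.
  intro HD. destruct heq as [_ [_ [_ HN]]].
  replace (FN B I M N) with (FN B I M N - FN 0 I5 M5 N5) by (rewrite HN; ring).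
  unfold fN, a21, a22, q, mite_jac21, mite_jac22. field. repeat split; lra.
Qed.

Hypothesis c1 : b / I5 < gam * I5 + m + lam * N5.
Hypothesis c2 : 2 * n + 3 * p * (M5 + N5) / (h * I5) + beta * I5 + delta * N5 > r + delta * M5.
Hypothesis c3 : (r - n - p * (2 * M5 + N5) / (h * I5) - beta * I5 - delta * N5)
                  * (delta * M5 - n - p * (M5 + 2 * N5) / (h * I5))
                + (beta * I5 - p * N5 / (h * I5) + delta * N5)
                  * (p * M5 / (h * I5) + delta * M5 - r) > 0.

Lemma E5_mite_trace_neg : a11 + a22 < 0.
Proof.
  replace (a11 + a22) with
    (r + delta * M5 - (2 * n + 3 * p * (M5 + N5) / (h * I5) + beta * I5 + delta * N5))
    by (unfold a11, a22, mite_jac11, mite_jac22; field; lra).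
  lra.
Qed.

Lemma E5_mite_det_pos : 0 < a11 * a22 - a12 * a21.
Proof. unfold a11, a12, a21, a22, mite_jac11, mite_jac12, mite_jac21, mite_jac22. lra. Qed.

Let k := gam * I5 + m + lam * N5 - b / I5.
Let det := a11 * a22 - a12 * a21.
Let tau := - (a11 + a22) * det.

Lemma E5_deriv_bound : exists K r0, 0 < K /\ 0 < r0 /\ r0 <= I5 / 2 /\
  forall B I M N, 0 <= B <= r0 ->
    Rabs (I - I5) <= r0 -> Rabs (M - M5) <= r0 -> Rabs (N - N5) <= r0 ->
    lyapE5_deriv K a11 a12 a21 a22 I5 M5 N5 B I M N
      (FB B I M N) (FI B I M N) (FM B I M N) (FN B I M N)
    <= - (k / 4) * B - (I - I5) * (I - I5)
       - tau / 2 * ((Rabs (M - M5) + Rabs (N - N5)) * (Rabs (M - M5) + Rabs (N - N5))).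
Proof.
  pose proof E5_mite_det_pos as Hdet. pose proof E5_mite_trace_neg as Htr. fold det in Hdet.
  assert (Hk : 0 < k) by (unfold k; lra).
  assert (Hq : 0 < q) by (unfold q; apply Rdiv_lt_0_compat; nra).
  assert (Htau : 0 < tau) by (unfold tau; nra).
  set (P := det + (a11 * a11 + a12 * a12 + a21 * a21 + a22 * a22)).
  assert (HP : 0 < P) by (unfold P; nra).
  set (cg := lam + gam + 2 * b / (I5 * I5)).
  set (Cv := lam * (N5 + I5) + 2 * gam * I5 + b / I5).
  set (sm := 2 * q / I5).
  set (Cu := 4 * P * ((M5 + I5) + (N5 + I5)) * (sm * (M5 + N5 + I5) + e)).
  set (C3 := P * (sm * (M5 + N5 + I5) * ((M5 + I5) + (N5 + I5)) + 2 * beta * (M5 + I5))).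
  assert (Hsm : 0 < sm) by (unfold sm; apply Rdiv_lt_0_compat; lra).
  assert (Hcg : 0 < cg) by (unfold cg; assert (0 < 2 * b / (I5 * I5)) by
    (apply Rdiv_lt_0_compat; nra); lra).
  assert (HCv : 0 < Cv) by (unfold Cv; assert (0 < b / I5) by (apply Rdiv_lt_0_compat; lra); nra).
  assert (HCu : 0 < Cu) by (unfold Cu; repeat apply Rmult_lt_0_compat; nra).
  (* [K] is just large enough for [cross_term_absorb]; [r0] makes each remainder
     at most a quarter of the corresponding main term. *)
  set (K := (4 * C3 * C3 + tau) / (tau * (b / (2 * I5)))).
  assert (Hb2 : 0 < b / (2 * I5)) by (apply Rdiv_lt_0_compat; lra).
  assert (HK : 0 < K) by (unfold K; apply Rdiv_lt_0_compat; nra).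
  assert (HKbig : 4 * C3 * C3 + tau <= K * (b / (2 * I5)) * tau) by (right; unfold K; field; lra).
  set (r0 := Rmin (I5 / 2) (Rmin (k / 4 / cg) (Rmin (k / 4 / (2 * K * Cv))
               (Rmin (k / 4 / Cu) (tau / 4 / (8 * P * (q + delta))))))).
  assert (HKCv : 0 < 2 * K * Cv) by nra.
  assert (HPq : 0 < 8 * P * (q + delta)) by nra.
  assert (Hr0 : 0 < r0)
    by (unfold r0; repeat apply Rmin_pos; try apply Rdiv_lt_0_compat; lra).
  destruct (Rmin_le_five (I5 / 2) (k / 4 / cg) (k / 4 / (2 * K * Cv)) (k / 4 / Cu)
              (tau / 4 / (8 * P * (q + delta)))) as [H1 [H2 [H3 [H4 H5]]]].
  fold r0 in H1, H2, H3, H4, H5.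
  exists K, r0. split; [exact HK|]. split; [exact Hr0|]. split; [exact H1|].
  intros B I M N HB Hv Hx Hy.
  assert (HD : B + I <> 0) by (apply Rabs_le_inv in Hv; lra).
  rewrite fB_factor, fI_near_E5, fM_near_E5, fN_near_E5 by exact HD.
  apply (lyapE5_deriv_le b lam gam m beta delta e q I5 M5 N5 a11 a12 a21 a22
           hb hlam hgam hbeta hdelta he Hq hI5 hM5 hN5 Hdet Htr r0); auto;
    apply mul_le_of_le_div; assumption.
Qed.

Lemma E5_lyapunov_decay : exists K alpha rho0, 0 < K /\ 0 < alpha /\ 0 < rho0 /\
  forall B I M N, inD0 B I M N -> lyapE5 K a11 a12 a21 a22 I5 M5 N5 B I M N < rho0 ->
    lyapE5_deriv K a11 a12 a21 a22 I5 M5 N5 B I M N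
      (FB B I M N) (FI B I M N) (FM B I M N) (FN B I M N)
    <= - alpha * lyapE5 K a11 a12 a21 a22 I5 M5 N5 B I M N.
Proof.
  destruct E5_deriv_bound as [K [r0 [HK [Hr0 [Hr0I5 Hbound]]]]].
  pose proof E5_mite_det_pos as Hdet. pose proof E5_mite_trace_neg as Htr. fold det in Hdet.
  assert (Hk : 0 < k) by (unfold k; lra).
  assert (Htau : 0 < tau) by (unfold tau; nra).
  set (Wb := det + 2 * (a11 * a11 + a12 * a12 + a21 * a21 + a22 * a22)).
  assert (HWb : 0 < Wb) by (unfold Wb; nra).
  set (alpha := Rmin (k / 4) (Rmin (/ K) (tau / (2 * Wb)))).
  set (rho0 := Rmin r0 (Rmin (K * (r0 * r0)) (det * (r0 * r0)))).
  assert (Halpha : 0 < alpha) by (unfold alpha; repeat apply Rmin_pos;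
    try apply Rinv_0_lt_compat; try apply Rdiv_lt_0_compat; lra).
  assert (Hrho0 : 0 < rho0)
    by (unfold rho0; repeat apply Rmin_pos; repeat apply Rmult_lt_0_compat; lra).
  exists K, alpha, rho0. split; [exact HK|]. split; [exact Halpha|]. split; [exact Hrho0|].
  intros B I M N [HB _] HV.
  pose proof (Rmin_l r0 (Rmin (K * (r0 * r0)) (det * (r0 * r0)))) as Hr1.
  pose proof (Rmin_r r0 (Rmin (K * (r0 * r0)) (det * (r0 * r0)))) as Hr2.
  pose proof (Rmin_l (K * (r0 * r0)) (det * (r0 * r0))).
  pose proof (Rmin_r (K * (r0 * r0)) (det * (r0 * r0))).
  fold rho0 in Hr1, Hr2.
  destruct (lyapE5_box K a11 a12 a21 a22 I5 M5 N5 HK Hdet r0 B I M N)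
    as [HBr [Hv [Hx Hy]]]; try (fold det; lra).
  pose proof (Rmin_l (k / 4) (Rmin (/ K) (tau / (2 * Wb)))) as Ha1.
  pose proof (Rmin_r (k / 4) (Rmin (/ K) (tau / (2 * Wb)))) as Ha2.
  pose proof (Rmin_l (/ K) (tau / (2 * Wb))). pose proof (Rmin_r (/ K) (tau / (2 * Wb))).
  fold alpha in Ha1, Ha2.
  apply (lyapE5_deriv_dominated K a11 a12 a21 a22 I5 M5 N5 Hdet (k / 4) (tau / 2)); try lra.
  - apply mul_le_of_le_div; [exact HK|]. unfold Rdiv. lra.
  - change (alpha * Wb <= tau / 2). apply mul_le_of_le_div; [exact HWb|].
    replace (tau / 2 / Wb) with (tau / (2 * Wb)) by (field; lra). lra.
  - apply Hbound; [lra | exact Hv | exact Hx | exact Hy].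
Qed.

End EquilibriumE5.

Theorem mainTheorem7
  (b lam gam m mu r n p h beta delta e : R)
  (hb : 0 < b) (hlam : 0 < lam) (hgam : 0 < gam) (hm : 0 < m) (hmu : 0 < mu)
  (hr : 0 < r) (hn : 0 < n) (hp : 0 < p) (hh : 0 < h) (hbeta : 0 < beta)
  (hdelta : 0 < delta) (he : 0 < e)
  (I5 M5 N5 : R) (hI5 : 0 < I5) (hM5 : 0 <= M5) (hN5 : 0 <= N5)
  (heq : is_equilibrium b lam gam m mu r n p h beta delta e 0 I5 M5 N5)
  (c1 : b / I5 < gam * I5 + m + lam * N5)
  (c2 : 2 * n + 3 * p * (M5 + N5) / (h * I5) + beta * I5 + delta * N5
          > r + delta * M5)
  (c3 : (r - n - p * (2 * M5 + N5) / (h * I5) - beta * I5 - delta * N5)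
          * (delta * M5 - n - p * (M5 + 2 * N5) / (h * I5))
        + (beta * I5 - p * N5 / (h * I5) + delta * N5)
          * (p * M5 / (h * I5) + delta * M5 - r) > 0) :
  loc_asympt_stable b lam gam m mu r n p h beta delta e 0 I5 M5 N5.
Proof.
  destruct (E5_lyapunov_decay b lam gam m mu r n p h beta delta e I5 M5 N5
              hb hlam hgam hp hh hbeta hdelta he hI5 hM5 hN5 heq c1 c2 c3)
    as [K [alpha [rho0 [HK [Halpha [Hrho0 Hdecay]]]]]].
  pose proof (E5_mite_det_pos r n p h beta delta I5 M5 N5 c3) as Hdet.
  set (a11 := mite_jac11 r n p h beta delta I5 M5 N5) in *.
  set (a12 := mite_jac12 r p h delta I5 M5) in *.
  set (a21 := mite_jac21 p h beta delta I5 N5) in *.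
  set (a22 := mite_jac22 n p h delta I5 M5 N5) in *.
  apply (lyapunov_loc_asympt_stable b lam gam m mu r n p h beta delta e 0 I5 M5 N5
           (lyapE5 K a11 a12 a21 a22 I5 M5 N5)
           (fun B I M N => lyapE5_deriv K a11 a12 a21 a22 I5 M5 N5 B I M N
              (fB b lam gam m mu r n p h beta delta e B I M N)
              (fI b lam gam m mu r n p h beta delta e B I M N)
              (fM b lam gam m mu r n p h beta delta e B I M N)
              (fN b lam gam m mu r n p h beta delta e B I M N))
           alpha rho0); auto.
  - intros Bf If Mf Nf [_ [Hder _]] t Ht.
    destruct (Hder t Ht) as [HB [HI [HM HN]]]. apply lyapE5_derivable; assumption.
  - intros B I M N [HB _]. apply lyapE5_nonneg; assumption.
  - intros rho Hrho.
    destruct (lyapE5_small_near K a11 a12 a21 a22 I5 M5 N5 HK Hdet rho Hrho) as [d [Hd Hnear]].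
    exists d. split; [exact Hd|]. intros B I M N [HB _]. apply Hnear, HB.
  - intros eps Heps.
    destruct (lyapE5_coercive K a11 a12 a21 a22 I5 M5 N5 HK Hdet eps Heps) as [rho [Hrho Hfar]].
    exists rho. split; [exact Hrho|]. intros B I M N [HB _]. apply Hfar, HB.
Qed.
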